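(* Let $\alpha=0$ (so $f=z^2$) and let $P$ be a nonzero graded right ideal of $A$ with structure constants $\{c_i\}$. Then $P$ is projective if and only if $c_n\neq\sigma^n(z)$ for every $n\in\mathbb{Z}$.
   Context: $\Bbbk$ algebraically closed of characteristic $0$; $\sigma(z)=z+1$. $A=A(z^2)$ generated by $\Bbbk[z],x,y$ with $xz=(z+1)x$, $yz=(z-1)y$, $xy=z^2$, $yx=(z-1)^2$, graded by $\deg x=1,\deg y=-1,\deg z=0$. $Q_{\mathrm{gr}}(A)=\Bbbk(z)[x,x^{-1};\sigma]$ is the graded quotient ring. Any finitely generated graded right submodule $I\subseteq Q_{\mathrm{gr}}(A)$ has the form $\bigoplus_i\Bbbk[z]a_ix^i$ with $a_i\in\Bbbk(z)^\times$; its structure constants are $c_i=a_ia_{i+1}^{-1}$ normalized monic, each lying in $\{1,\sigma^i(z),\sigma^i(z)^2\}$. *)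

From HB Require Import structures.
From mathcomp Require Import all_boot all_order all_algebra.
From Stdlib Require Import ClassicalEpsilon.
Set Implicit Arguments. Unset Strict Implicit. Unset Printing Implicit Defensive.
Import Order.TTheory GRing.Theory Num.Theory.
Local Open Scope ring_scope.

(* The ring Q = k[z][x, x^{-1}; sigma] (the polynomial-coefficient part of
   Q_gr(A) = k(z)[x,x^{-1};sigma]), with sigma(z) = z+1.  An element
   sum_i f_i x^i is represented by its coefficient function f : int -> k[z]
   (only finitely supported functions are meaningful). *)
Section Q.
Variable K : fieldType.

Definition Qel := int -> {poly K}.

Definition shift (i : int) (p : {poly K}) : {poly K} := p \Po ('X + (i%:~R)%:P).

Definition fbounded (f : Qel) (N : nat) : Prop :=
  forall i : int, (N < absz i)%N -> f i = 0.

Definition finsupp (f : Qel) : Prop := exists N, fbounded f N.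

(* some bound for the support of f (any bound works, chosen classically) *)
Definition bnd (f : Qel) : nat := epsilon (inhabits 0%N) (fbounded f).

Definition mono (i : int) (p : {poly K}) : Qel := fun n => if n == i then p else 0.

Definition addQ (f g : Qel) : Qel := fun n => f n + g n.

(* (sum_i f_i x^i)(sum_j g_j x^j) = sum_n (sum_i f_i sigma^i(g_{n-i})) x^n *)
Definition mulQ (f g : Qel) : Qel := fun n =>
  let B := bnd f in
  \sum_(k < B.*2.+1) f (k%:Z - B%:Z) * shift (k%:Z - B%:Z) (g (n - (k%:Z - B%:Z))).

Definition oneQ : Qel := mono 0 1.
Definition zQ : Qel := mono 0 'X.
Definition xQ : Qel := mono 1 1.
(* y = (z-1)^2 x^{-1}, so that x y = z^2 and y x = (z-1)^2 *)
Definition yQ : Qel := mono (-1) (('X - 1) ^+ 2).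

Inductive inA : Qel -> Prop :=
| inA_const p : inA (mono 0 p)
| inA_x : inA xQ
| inA_y : inA yQ
| inA_add f g : inA f -> inA g -> inA (addQ f g)
| inA_mul f g : inA f -> inA g -> inA (mulQ f g).

(* the graded subspace  P = (+)_i k[z] a_i x^i  of Q *)
Definition inP (a : int -> {poly K}) (f : Qel) : Prop :=
  finsupp f /\ forall i, exists r : {poly K}, f i = r * a i.

Record rmodule := RModule {
  rm_car :> zmodType;
  rm_act : rm_car -> Qel -> rm_car;
  rm_actDl : forall m m' b, inA b -> rm_act (m + m') b = rm_act m b + rm_act m' b;
  rm_actDr : forall m b c, inA b -> inA c ->
      rm_act m (addQ b c) = rm_act m b + rm_act m c;
  rm_actM : forall m b c, inA b -> inA c -> rm_act m (mulQ b c) = rm_act (rm_act m b) c;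
  rm_act1 : forall m, rm_act m oneQ = m
}.

Definition is_hom (M N : rmodule) (h : M -> N) : Prop :=
  (forall m m', h (m + m') = h m + h m') /\
  (forall m b, inA b -> h (rm_act m b) = rm_act (h m) b).

(* A-module homomorphisms P -> N, P the right ideal (+)_i k[z] a_i x^i
   (a function on Q, only its values on P matter) *)
Definition is_Phom (a : int -> {poly K}) (N : rmodule) (g : Qel -> N) : Prop :=
  (forall p q, inP a p -> inP a q -> g (addQ p q) = g p + g q) /\
  (forall p b, inP a p -> inA b -> g (mulQ p b) = rm_act (g p) b).

Definition projectiveP (a : int -> {poly K}) : Prop :=
  forall (M N : rmodule) (pi : M -> N), is_hom pi -> (forall n, exists m, pi m = n) ->
  forall g : Qel -> N, is_Phom a g ->
  exists h : Qel -> M, is_Phom a h /\ forall p, inP a p -> pi (h p) = g p.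

End Q.

From HB Require Import structures.
From mathcomp Require Import all_boot all_order all_algebra.
From mathcomp Require Import zify ring.
From mathcomp Require Import boolp functions.
From Stdlib Require Import ClassicalEpsilon.
Set Implicit Arguments. Unset Strict Implicit. Unset Printing Implicit Defensive.
Import Order.TTheory GRing.Theory Num.Theory.
Local Open Scope ring_scope.

(* A = (+)_l k[z] (Agen l) x^l with Agen (-t) = (z-1)^2 ... (z-t)^2, and the
   inclusions P x, P y in P force a_(k+1) | a_k | a_(k+1) (z+k)^2, so up to a
   scalar each structure constant a_k / a_(k+1) is 1, z+k or (z+k)^2.

   If it is never z+k: size arguments show that a is constant up to units
   from some R on, and that every step below some L <= R is a square.  The
   factors (z+k)^2, L <= k < R, are pairwise coprime (char 0), so a_L / a_R
   is coprime to the complementary part of their product, and a Bezout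
   identity T1 + T2 = 1 yields a dual basis: P is generated by a_L x^L and
   a_R x^R with A-linear coordinates p |-> x^-L a_L^-1 T1 p and
   p |-> x^-R a_R^-1 T2 p, hence projective.

   If a_n = c (z+n) a_(n+1): let M be the right Q-module of all series
   sum_k m_k x^k and N its quotient recording the constant terms of the
   coefficients of x^-t, t >= 0.  Then p |-> (t |-> (p_(n-t) / a_n)(-n)) is an
   A-linear map P -> N with no lift to M. *)

Section Shift.
Variable K : fieldType.
Implicit Types (p q : {poly K}) (i j : int).

HB.instance Definition _ i := GRing.RMorphism.copy (@shift K i) (comp_poly _).

Lemma shift_at0 p : shift 0 p = p.
Proof. by rewrite /shift addr0 comp_polyXr. Qed.

Lemma shift_shift i j p : shift i (shift j p) = shift (i + j) p.
Proof.
rewrite /shift -comp_polyA comp_polyD comp_polyX comp_polyC.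
by rewrite -addrA -polyCD -intrD addrC.
Qed.

Lemma shiftK i p : shift (- i) (shift i p) = p.
Proof. by rewrite shift_shift addNr shift_at0. Qed.

Lemma shiftC i (c : K) : shift i c%:P = c%:P.
Proof. exact: comp_polyC. Qed.

Lemma shiftX i : shift i 'X = 'X + (i%:~R)%:P :> {poly K}.
Proof. exact: comp_polyX. Qed.

Lemma horner_shift i p x : (shift i p).[x] = p.[x + i%:~R].
Proof. by rewrite /shift horner_comp hornerD hornerX hornerC. Qed.

Lemma shift_Xsub1 (n : int) : shift (n + 1) ('X - 1) = 'X + (n%:~R)%:P :> {poly K}.
Proof.
rewrite rmorphB rmorph1 /= shiftX intrD polyCD -addrA; congr (_ + _).
by rewrite polyC1 addrK.
Qed.

End Shift.

Section Window.
Variable K : fieldType.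
Implicit Types (f g : Qel K) (p q : {poly K}).

Definition window (N : nat) : seq int := [seq k%:Z - N%:Z | k <- iota 0 N.*2.+1].

Lemma mem_window N i : (i \in window N) = (absz i <= N)%N.
Proof.
apply/mapP/idP => [[k] | Hi]; first by rewrite mem_iota => /andP[_ Hk] ->; lia.
by exists (absz (i + N%:Z)); rewrite ?mem_iota; lia.
Qed.

Lemma uniq_window N : uniq (window N).
Proof. by rewrite map_inj_uniq ?iota_uniq // => x y /addIr []. Qed.

Definition supp_in f (s : seq int) := forall i, f i != 0 -> i \in s.

Lemma fbounded_window f N : fbounded f N -> supp_in f (window N).
Proof. by move=> fN i; rewrite mem_window leqNgt; apply: contra => /fN ->. Qed.

Lemma fbounded_maxl f N N' : fbounded f N -> fbounded f (maxn N N').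
Proof. by move=> fN i lt_i; apply: fN; lia. Qed.

Lemma fbounded_maxr f N N' : fbounded f N' -> fbounded f (maxn N N').
Proof. by rewrite maxnC; apply: fbounded_maxl. Qed.

Lemma bndP f : finsupp f -> fbounded f (bnd f).
Proof. exact: epsilon_spec. Qed.

Lemma eq_big_supp (R : zmodType) (s1 s2 : seq int) (F : int -> R) :
  uniq s1 -> uniq s2 -> (forall i, F i != 0 -> (i \in s1) && (i \in s2)) ->
  \sum_(i <- s1) F i = \sum_(i <- s2) F i.
Proof.
move=> u1 u2 HF; apply: perm_big_supp; apply: uniq_perm; rewrite ?filter_uniq //.
by move=> i; rewrite !mem_filter; case: (boolP (F i != 0)) => // /HF /andP[-> ->].
Qed.

Lemma big_window_shift (R : zmodType) (F : int -> R) (N N' : nat) (j : int) :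
  (forall i, F i != 0 -> (absz i <= N)%N /\ (absz (i - j) <= N')%N) ->
  \sum_(i <- window N) F i = \sum_(l <- window N') F (l + j).
Proof.
move=> supp; rewrite -(big_map (fun l => l + j) xpredT F).
apply: eq_big_supp; first exact: uniq_window.
  by rewrite map_inj_uniq ?uniq_window // => x y /addIr.
move=> i /supp [le_i le_ij]; rewrite mem_window le_i; apply/mapP.
by exists (i - j); rewrite ?mem_window ?subrK.
Qed.

Lemma big_window_reflect (R : zmodType) (F : int -> R) (N N' : nat) (m : int) :
  (forall i, F i != 0 -> (absz i <= N)%N /\ (absz (m - i) <= N')%N) ->
  \sum_(i <- window N) F i = \sum_(j <- window N') F (m - j).
Proof.
move=> supp; rewrite -(big_map (fun j => m - j) xpredT F).
apply: eq_big_supp; first exact: uniq_window.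
  by rewrite map_inj_uniq ?uniq_window // => x y /addrI /oppr_inj.
move=> i /supp [le_i le_mi]; rewrite mem_window le_i; apply/mapP.
by exists (m - i); rewrite ?mem_window // opprB addrC subrK.
Qed.

Lemma big_window_bnd (R : zmodType) f (s : seq int) (F : int -> R) :
  finsupp f -> uniq s -> supp_in f s -> (forall i, f i = 0 -> F i = 0) ->
  \sum_(i <- window (bnd f)) F i = \sum_(i <- s) F i.
Proof.
move=> fs us sf F0; apply: eq_big_supp; rewrite ?uniq_window //.
move=> i Fi; have fi : f i != 0 by apply: contraNneq Fi => /F0 ->.
by rewrite sf // (fbounded_window (bndP fs)).
Qed.

Lemma mulQ_bnd f g n :
  mulQ f g n = \sum_(i <- window (bnd f)) f i * shift i (g (n - i)).
Proof.
by rewrite /mulQ big_map -[iota 0 _]/(index_iota 0 (bnd f).*2.+1) big_mkord.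
Qed.

Lemma mulQE f g (s : seq int) n : finsupp f -> uniq s -> supp_in f s ->
  mulQ f g n = \sum_(i <- s) f i * shift i (g (n - i)).
Proof. by move=> *; rewrite mulQ_bnd; apply: big_window_bnd => // i ->; rewrite mul0r. Qed.

Lemma mulQ_window f g N n : fbounded f N ->
  mulQ f g n = \sum_(i <- window N) f i * shift i (g (n - i)).
Proof.
by move=> fN; apply: mulQE; [exists N | exact: uniq_window | exact: fbounded_window].
Qed.

Lemma finsupp_mono i p : finsupp (mono i p).
Proof. by exists (absz i) => j; rewrite /mono; case: eqP => // ->; rewrite ltnn. Qed.

Lemma supp_mono i p : supp_in (mono i p) [:: i].
Proof. by move=> j; rewrite /mono inE; case: (j =P i) => //; rewrite eqxx. Qed.

Lemma mulQ_monol i p g n : mulQ (mono i p) g n = p * shift i (g (n - i)).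
Proof.
rewrite (mulQE (s := [:: i]) _ _ (finsupp_mono i p)) //; last exact: supp_mono.
by rewrite big_seq1 /mono eqxx.
Qed.

Lemma finsupp_addQ f g : finsupp f -> finsupp g -> finsupp (addQ f g).
Proof.
move=> [N1 H1] [N2 H2]; exists (maxn N1 N2) => i Hi.
by rewrite /addQ (fbounded_maxl H1 Hi) (fbounded_maxr H2 Hi) addr0.
Qed.

Lemma fbounded_mulQ f g N1 N2 : fbounded f N1 -> fbounded g N2 ->
  fbounded (mulQ f g) (N1 + N2).
Proof.
move=> H1 H2 n Hn; rewrite (mulQ_window _ _ H1) big1 // => i _.
have [Hi|Hi] := leqP (absz i) N1; last by rewrite H1 // mul0r.
by rewrite H2 ?rmorph0 ?mulr0 //; lia.
Qed.

Lemma finsupp_mulQ f g : finsupp f -> finsupp g -> finsupp (mulQ f g).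
Proof. by move=> [N1 H1] [N2 H2]; exists (N1 + N2)%N; apply: fbounded_mulQ. Qed.

Lemma mulQ_mono i j p q : mulQ (mono i p) (mono j q) = mono (i + j) (p * shift i q).
Proof.
apply: funext => n; rewrite mulQ_monol /mono.
have -> : (n - i == j) = (n == i + j) by apply/eqP/eqP; lia.
by case: (_ == _); rewrite ?rmorph0 ?mulr0.
Qed.

End Window.

Section Agen.
Variable K : fieldType.
Implicit Types (f g : Qel K) (p q : {poly K}) (i j l m : int).

Lemma size_exp_XaddC n (c : K) : size (('X + c%:P) ^+ n) = n.+1.
Proof. by rewrite -[c]opprK polyCN size_exp_XsubC. Qed.

Definition sqrun m (N : nat) : {poly K} :=
  \prod_(k < N) ('X + ((m + k%:Z)%:~R)%:P) ^+ 2.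

Definition Agen l : {poly K} := if l < 0 then sqrun l (absz l) else 1.

Lemma sqrun0 m : sqrun m 0 = 1.
Proof. by rewrite /sqrun big_ord0. Qed.

Lemma sqrun1 m : sqrun m 1 = ('X + (m%:~R)%:P) ^+ 2.
Proof. by rewrite /sqrun big_ord1 addr0. Qed.

Lemma sqrunD m N M : sqrun m (N + M) = sqrun m N * sqrun (m + N%:Z) M.
Proof.
rewrite /sqrun big_split_ord; congr (_ * _); apply: eq_bigr => i _ /=.
by rewrite PoszD addrA.
Qed.

Lemma sqrunS m N : sqrun m N.+1 = ('X + (m%:~R)%:P) ^+ 2 * sqrun (m + 1) N.
Proof. by rewrite -add1n sqrunD sqrun1. Qed.

Lemma sqrunSr m N : sqrun m N.+1 = sqrun m N * ('X + ((m + N%:Z)%:~R)%:P) ^+ 2.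
Proof. by rewrite -addn1 sqrunD sqrun1. Qed.

Lemma shift_sqrun i m N : shift i (sqrun m N) = sqrun (m + i) N.
Proof.
rewrite /sqrun rmorph_prod; apply: eq_bigr => k _.
rewrite rmorphXn rmorphD /= shiftX shiftC -addrA -polyCD -intrD.
by congr (('X + (_ %:~R)%:P) ^+ 2); ring.
Qed.

Lemma sqrun_monic m N : sqrun m N \is monic.
Proof. by apply: monic_prod => i _; rewrite monic_exp // monicXaddC. Qed.

Lemma sqrun_neq0 m N : sqrun m N != 0.
Proof. exact: monic_neq0 (sqrun_monic m N). Qed.

Lemma size_sqrun m N : size (sqrun m N) = N.*2.+1.
Proof.
elim: N => [|N IH]; first by rewrite sqrun0 size_poly1.
rewrite sqrunSr size_Mmonic ?sqrun_neq0 ?monic_exp ?monicXaddC // IH.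
by rewrite size_exp_XaddC; lia.
Qed.

Lemma Agen_ge0 l : 0 <= l -> Agen l = 1.
Proof. by rewrite /Agen ltNge => ->. Qed.

Lemma Agen_lt0 l : l < 0 -> Agen l = sqrun l (absz l).
Proof. by rewrite /Agen => ->. Qed.

Lemma Agen_m1 : Agen (-1) = ('X - 1) ^+ 2.
Proof. by rewrite Agen_lt0 // sqrun1 mulrN1z polyCN. Qed.

Lemma Agen_root l (s : int) : 0 < s -> s <= - l -> root (Agen l) s%:~R.
Proof.
move=> s0 sl; rewrite Agen_lt0; last by lia.
have -> : absz l = (absz (- l - s) + (1 + absz (s - 1)))%N by lia.
rewrite !sqrunD rootM; apply/orP; right; rewrite rootM; apply/orP; left.
rewrite sqrun1 rootE horner_exp hornerD hornerX hornerC.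
have -> : l + (absz (- l - s))%:Z = - s by lia.
by rewrite mulrNz subrr expr0n.
Qed.

Lemma AgenD_le0 i j : i <= 0 -> j <= 0 -> Agen (i + j) = Agen i * shift i (Agen j).
Proof.
move=> Hi Hj; have [->|i0] := eqVneq i 0.
  by rewrite add0r (Agen_ge0 (lexx 0)) mul1r shift_at0.
have [->|j0] := eqVneq j 0; first by rewrite addr0 (Agen_ge0 (lexx 0)) rmorph1 mulr1.
rewrite !Agen_lt0 ?shift_sqrun; try lia.
have -> : absz (i + j) = (absz j + absz i)%N by lia.
by rewrite sqrunD mulrC; congr (sqrun _ _ * sqrun _ _); lia.
Qed.

Lemma Agen_dvd_mul i j : Agen (i + j) %| Agen i * shift i (Agen j).
Proof.
have [Hij|Hij] := leP 0 (i + j); first by rewrite Agen_ge0 ?dvd1p.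
have [Hi|Hi] := leP i 0; have [Hj|Hj] := leP j 0.
- by rewrite AgenD_le0.
- rewrite (Agen_ge0 (ltW Hj)) rmorph1 mulr1 !Agen_lt0; try lia.
  have -> : absz i = (absz j + absz (i + j)%R)%N by lia.
  rewrite sqrunD; have -> : i + (absz j)%:Z = i + j by lia.
  exact: dvdp_mull.
- rewrite (Agen_ge0 (ltW Hi)) mul1r !Agen_lt0 ?shift_sqrun; try lia.
  have -> : absz j = (absz (i + j)%R + absz i)%N by lia.
  by rewrite sqrunD (addrC j i) dvdp_mulr.
- lia.
Qed.

Lemma shift_Agen i m :
  shift i (Agen (m - i)) = if m < i then sqrun m (absz (i - m)) else 1.
Proof.
case: ltP => H; last by rewrite Agen_ge0 ?rmorph1 //; lia.
by rewrite Agen_lt0 ?shift_sqrun; [congr sqrun | ]; lia.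
Qed.

Lemma size_Agen_opp (t : nat) : size (Agen (- t%:Z)) = t.*2.+1.
Proof.
case: t => [|t]; first by rewrite Agen_ge0 ?size_poly1.
by rewrite Agen_lt0 ?oppr_lt0 // size_sqrun abszN.
Qed.

Definition Agraded f := finsupp f /\ forall l, Agen l %| f l.

Lemma Agraded_mono i p : Agen i %| p -> Agraded (mono i p).
Proof.
split=> [|l]; first exact: finsupp_mono.
by rewrite /mono; case: eqP => [->|]; rewrite ?dvdp0.
Qed.

Lemma Agraded_mulQ f g : Agraded f -> Agraded g -> Agraded (mulQ f g).
Proof.
move=> [ff Hf] [fg Hg]; split=> [|l]; first exact: finsupp_mulQ.
rewrite mulQ_bnd; apply: (big_ind (dvdp (Agen l))) => [|p q|i _].
- exact: dvdp0.
- exact: dvdp_add.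
have /dvdpP [r1 ->] := Hf i; have /dvdpP [r2 ->] := Hg (l - i).
rewrite rmorphM mulrACA dvdp_mull //.
by have := Agen_dvd_mul i (l - i); rewrite addrC subrK.
Qed.

Lemma inA_Agraded f : inA f -> Agraded f.
Proof.
elim=> {f} [p | | | f g _ [ff Hf] _ [fg Hg] | f g _ Hf _ Hg].
- by apply: Agraded_mono; rewrite Agen_ge0 ?dvd1p.
- by apply: Agraded_mono; rewrite Agen_ge0 ?dvd1p.
- by apply: Agraded_mono; rewrite Agen_m1.
- by split=> [|l]; [exact: finsupp_addQ | rewrite /addQ dvdp_add].
- exact: Agraded_mulQ.
Qed.

Lemma inA_mono_Agen_nat (n : nat) :
  inA (mono n (Agen n)) /\ inA (mono (- n%:Z) (Agen (- n%:Z))).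
Proof.
elim: n => [|n [IHp IHn]]; first by split; apply: inA_const.
split.
- have -> : mono n.+1 (Agen n.+1) = mulQ (mono n (Agen n)) (xQ K).
    by rewrite /xQ mulQ_mono !Agen_ge0 // rmorph1 mulr1; congr mono; lia.
  exact: inA_mul IHp (inA_x K).
- have -> : mono (- n.+1%:Z) (Agen (- n.+1%:Z)) =
      mulQ (mono (- n%:Z) (Agen (- n%:Z))) (yQ K).
    rewrite /yQ -Agen_m1 mulQ_mono -AgenD_le0 ?oppr_le0 //.
    by have -> : - n%:Z + -1 = - n.+1%:Z by lia.
  exact: inA_mul IHn (inA_y K).
Qed.

Lemma inA_mono i p : Agen i %| p -> inA (mono i p).
Proof.
move=> /dvdpP [r ->].
have -> : mono i (r * Agen i) = mulQ (mono 0 r) (mono i (Agen i)).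
  by rewrite mulQ_mono shift_at0 add0r.
apply: inA_mul (inA_const r) _.
have [Hi|Hi] := leP 0 i; first by have [+ _] := inA_mono_Agen_nat (absz i); rewrite gez0_abs.
by have [_] := inA_mono_Agen_nat (absz i); rewrite ltz0_abs // opprK.
Qed.

Definition sumQ (s : seq int) (F : int -> Qel K) : Qel K :=
  foldr (fun i acc => addQ (F i) acc) (mono 0 0) s.

Lemma sumQE s F n : sumQ s F n = \sum_(i <- s) F i n.
Proof.
elim: s => [|i s IH]; first by rewrite big_nil /= /mono; case: (_ == _).
by rewrite big_cons /= /addQ IH.
Qed.

Lemma inA_sumQ s F : (forall i, inA (F i)) -> inA (sumQ s F).
Proof. by move=> H; elim: s => [|i s IH]; [exact: inA_const | exact: inA_add]. Qed.

Lemma Agraded_inA f : Agraded f -> inA f.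
Proof.
move=> [[N fN] Hf].
have -> : f = sumQ (window N) (fun i => mono i (f i)).
  apply: funext => n; rewrite sumQE.
  have [Hn|Hn] := leqP (absz n) N.
    rewrite (bigD1_seq n) ?mem_window ?uniq_window //= /mono eqxx big1 ?addr0 //.
    by move=> i /negbTE; rewrite eq_sym => ->.
  rewrite fN // big1_seq // => i; rewrite mem_window /mono.
  by case: eqP => [<-|//]; rewrite leqNgt Hn.
by apply: inA_sumQ => i; apply: inA_mono.
Qed.

Lemma inAP f : inA f <-> Agraded f.
Proof. by split; [exact: inA_Agraded | exact: Agraded_inA]. Qed.

End Agen.

Arguments sqrun {K}.
Arguments Agen {K}.

Lemma ex_argmin_nat (T : Type) (f : T -> nat) (x0 : T) : exists x, forall y, (f x <= f y)%N.
Proof.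
have : exists n, `[< exists x, f x = n >] by exists (f x0); apply/asboolP; exists x0.
case/ex_minnP => n /asboolP [x <-] minx; exists x => y.
by apply: minx; apply/asboolP; exists y.
Qed.

Lemma nonincreasing_stable (u : nat -> nat) (T : nat) : (forall t, u t.+1 <= u t)%N ->
  exists2 t0, (T <= t0)%N & forall t, (t0 <= t)%N -> u t = u t0.
Proof.
move=> u_nonincr; have [t0 min_t0] := ex_argmin_nat (fun t => u (T + t)%N) 0%N.
have u_le s t : (s <= t)%N -> (u t <= u s)%N.
  move=> /subnKC <-; elim: (t - s)%N => [|d IH]; first by rewrite addn0.
  by rewrite addnS (leq_trans (u_nonincr _)).
exists (T + t0)%N => [|t le_t]; first exact: leq_addr.
apply/eqP; rewrite eqn_leq u_le //=.
by have := min_t0 (t - T)%N; rewrite subnKC // (leq_trans (leq_addr _ _) le_t).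
Qed.

(* [w t - 2 t] is nonincreasing, hence eventually constant. *)
Lemma eventually_step2 (w : nat -> nat) (T : nat) :
  (forall t, t.*2 < w t)%N -> (forall t, w t.+1 = w t \/ w t.+1 = w t + 2)%N ->
  exists2 t0, (T <= t0)%N & forall t, (t0 <= t)%N -> w t.+1 = (w t + 2)%N.
Proof.
move=> w_gt w_step; pose u t := (w t - t.*2)%N.
have u_nonincr t : (u t.+1 <= u t)%N.
  by have := w_step t; have := w_gt t; have := w_gt t.+1; rewrite /u; lia.
have [t0 le_t0 u_const] := nonincreasing_stable T u_nonincr.
exists t0 => // t le_t; have := u_const t.+1 (leqW le_t); have := u_const t le_t.
by have := w_step t; have := w_gt t.+1; rewrite /u; lia.
Qed.

Section StructureConstants.
Variable K : fieldType.
Variable a : int -> {poly K}.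
Hypothesis ha : forall i, a i != 0.
Hypothesis hPA : forall f, inP a f -> inA f.
Hypothesis hPr : forall f b, inP a f -> inA b -> inP a (mulQ f b).
Implicit Types (i k m n : int).

Lemma inP_mono n : inP a (mono n (a n)).
Proof.
split=> [|i]; first exact: finsupp_mono.
by rewrite /mono; case: eqP => [->|]; [exists 1; rewrite mul1r | exists 0; rewrite mul0r].
Qed.

Lemma dvdp_a_succ n : a (n + 1) %| a n.
Proof.
have [_ /(_ (n + 1)) [r]] := hPr (inP_mono n) (inA_x K).
rewrite mulQ_monol /xQ /mono (_ : n + 1 - n = 1) ?eqxx ?rmorph1 ?mulr1; last by ring.
by move=> ->; apply: dvdp_mull.
Qed.

Lemma dvdp_a_pred n : a n %| a (n + 1) * ('X + (n%:~R)%:P) ^+ 2.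
Proof.
have [_ /(_ n) [r]] := hPr (inP_mono (n + 1)) (inA_y K).
rewrite mulQ_monol /yQ /mono (_ : n - (n + 1) = -1) ?eqxx; last by ring.
by rewrite rmorphXn /= shift_Xsub1 => ->; apply: dvdp_mull.
Qed.

Lemma Agen_dvd_a m : Agen m %| a m.
Proof. by have [_ /(_ m)] := inA_Agraded (hPA (inP_mono m)); rewrite /mono eqxx. Qed.

Lemma dvdp_a_le m k : m <= k -> a k %| a m.
Proof.
move=> le_mk; have -> : k = m + (absz (k - m))%:Z by lia.
elim: (absz _) => [|N IH]; first by rewrite addr0.
by apply: dvdp_trans IH; rewrite -addn1 PoszD addrA dvdp_a_succ.
Qed.

Lemma dvdp_a_sqrun m (N : nat) : a m %| a (m + N%:Z) * sqrun m N.
Proof.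
elim: N => [|N IH]; first by rewrite sqrun0 mulr1 addr0.
apply: dvdp_trans IH _; rewrite sqrunSr mulrA mulrAC dvdp_mul2r ?sqrun_neq0 //.
by have := dvdp_a_pred (m + N%:Z); rewrite -addrA -PoszD addn1.
Qed.

(* The structure constant c_k = a k / a (k + 1) divides (z + k)^2. *)
Lemma a_step k : ~ (exists c : K, a k = c *: (('X + (k%:~R)%:P) * a (k + 1))) ->
  exists2 g : K, g != 0 &
    a k = g *: a (k + 1) \/ a k = g *: (('X + (k%:~R)%:P) ^+ 2 * a (k + 1)).
Proof.
move=> not_lin; have /dvdpP [c def_ak] := dvdp_a_succ k.
have : c %| ('X - (- k%:~R)%:P) ^+ 2.
  rewrite polyCN opprK -(dvdp_mul2r _ _ (ha (k + 1))) -def_ak mulrC.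
  exact: dvdp_a_pred.
case/dvdp_exp_XsubCP => e le_e2 /eqpf_eq [g g0 def_c].
rewrite polyCN opprK in def_c.
exists g => //; rewrite def_ak def_c -scalerAl.
case: e le_e2 def_c => [|[|[|//]]] _ def_c.
- by left; rewrite expr0 mul1r.
- by case: not_lin; exists g; rewrite def_ak def_c expr1 -scalerAl.
- by right.
Qed.

Lemma size_a_opp (t : nat) : (t.*2 < size (a (- t%:Z)))%N.
Proof. by rewrite -ltnS -(size_Agen_opp K) ltnS dvdp_leq ?Agen_dvd_a. Qed.

Lemma ex_a_stable_right : exists R, forall m, R <= m -> a R %| a m.
Proof.
have [R minR] := ex_argmin_nat (fun m => size (a m)) 0.
exists R => m le_Rm; have dvd_mR := dvdp_a_le le_Rm.
suff /(eqp_dvdr (a R)) -> : a m %= a R by [].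
by rewrite -dvdp_size_eqp // eqn_leq minR andbT dvdp_leq.
Qed.

Hypothesis hnl : forall n, ~ exists c : K, a n = c *: (('X + (n%:~R)%:P) * a (n + 1)).

Lemma size_a_step k :
  size (a k) = size (a (k + 1)) \/ size (a k) = (size (a (k + 1)) + 2)%N.
Proof.
have [g g0 [->|->]] := a_step (@hnl k); rewrite size_scale //; [by left | right].
by rewrite size_monicM ?ha ?monic_exp ?monicXaddC // size_exp_XaddC addSn addnC.
Qed.

Lemma ex_a_sqstep_left R : exists2 L, L <= R & forall m, m < L ->
  exists2 g : K, g != 0 & a m = g *: (('X + (m%:~R)%:P) ^+ 2 * a (m + 1)).
Proof.
have a_step_opp t : size (a (- t.+1%:Z)) = size (a (- t%:Z)) \/
    size (a (- t.+1%:Z)) = (size (a (- t%:Z)) + 2)%N.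
  by have := size_a_step (- t.+1%:Z); rewrite (_ : - t.+1%:Z + 1 = - t%:Z) //; lia.
have [t0 le_t0 step2] := eventually_step2 (maxn 1 (absz R)) size_a_opp a_step_opp.
exists (- t0%:Z) => [|m lt_m]; first by lia.
have [t def_m] : exists t : nat, m = - t.+1%:Z by exists (absz m).-1; lia.
have le_t0t : (t0 <= t)%N by lia.
subst m; have [g g0 [def_am|]] := a_step (@hnl (- t.+1%:Z)); last by exists g.
have := step2 t le_t0t; rewrite def_am size_scale // (_ : - t.+1%:Z + 1 = - t%:Z); last by lia.
by move=> /eqP; rewrite -[X in X == _]addn0 eqn_add2l.
Qed.

End StructureConstants.

Section CharZero.
Variable K : fieldType.
Hypothesis hK : [pchar K] =i pred0.

Lemma pchar0_intr_eq0 (z : int) : ((z%:~R : K) == 0) = (z == 0).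
Proof.
have natr_eq0 := (pcharf0P K).1 hK.
by case: z => n; rewrite ?NegzE ?mulrNz ?oppr_eq0 natr_eq0.
Qed.

Lemma sqrun_coprime m N :
  coprimep (('X + ((m + N%:Z)%:~R)%:P) ^+ 2) (sqrun m N : {poly K}).
Proof.
rewrite coprimep_pexpl // -[_%:P]opprK -polyCN coprimep_sym coprimep_XsubC.
rewrite /root /sqrun horner_prod prodf_seq_eq0; apply/hasP => -[i _ /=].
rewrite horner_exp hornerD hornerX hornerC expf_eq0 /= -intrN -intrD pchar0_intr_eq0.
by have := ltn_ord i; lia.
Qed.

End CharZero.

Section DualBasisData.
Variable K : fieldType.
Hypothesis hK : [pchar K] =i pred0.
Variable a : int -> {poly K}.
Hypothesis ha : forall i, a i != 0.
Hypothesis hPA : forall f, inP a f -> inA f.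
Hypothesis hPr : forall f b, inP a f -> inA b -> inP a (mulQ f b).
Hypothesis hnl : forall n : int, ~ exists c : K, a n = c *: (('X + (n%:~R)%:P) * a (n + 1)).

(* The steps of [a] are units or squares of distinct, hence pairwise coprime,
   linear factors. *)
Lemma a_quotient_coprime L (N : nat) : exists G H,
  [/\ G * a (L + N%:Z) = a L, G * H = sqrun L N & coprimep G H].
Proof.
elim: N => [|N [G [H [aLG GH coGH]]]].
  by exists 1, 1; rewrite addr0 mul1r mulr1 sqrun0 coprime1p.
pose X2 : {poly K} := ('X + ((L + N%:Z)%:~R)%:P) ^+ 2.
have co_X2 : coprimep X2 (G * H) by rewrite GH sqrun_coprime.
have a_next : a (L + N%:Z + 1) = a (L + N.+1%:Z) by congr a; lia.
have [g g0 [a_eq|a_eq]] := a_step ha hPr (@hnl (L + N%:Z)); rewrite a_next in a_eq.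
- exists (g *: G), (g^-1 *: (H * X2)); split.
  + by rewrite -scalerAl scalerAr -a_eq.
  + by rewrite -scalerAl -scalerAr scalerA divff // scale1r mulrA GH sqrunSr.
  + rewrite coprimepZl // coprimepZr ?invr_eq0 // coprimepMr coGH /=.
    by rewrite coprimep_sym (coprimep_dvdl (dvdp_mulr H (dvdpp G)) co_X2).
- exists (g *: (G * X2)), (g^-1 *: H); split.
  + by rewrite -scalerAl -mulrA scalerAr -a_eq.
  + by rewrite -scalerAl -scalerAr scalerA divff // scale1r mulrAC GH sqrunSr.
  + rewrite coprimepZl // coprimepZr ?invr_eq0 // coprimepMl coGH /=.
    exact: coprimep_dvdl (dvdp_mull G (dvdpp H)) co_X2.
Qed.

Lemma dvdp_sqrun_left L :
  (forall m, m < L -> exists2 g : K, g != 0 &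
     a m = g *: (('X + (m%:~R)%:P) ^+ 2 * a (m + 1))) ->
  forall N : nat, a L * sqrun (L - N%:Z) N %| a (L - N%:Z).
Proof.
move=> sq_left; elim=> [|N IH]; first by rewrite subr0 sqrun0 mulr1.
have [|g g0 ->] := sq_left (L - N.+1%:Z); first by lia.
rewrite sqrunS (_ : L - N.+1%:Z + 1 = L - N%:Z); last by lia.
by rewrite dvdpZr // mulrCA dvdp_mul2l ?expf_neq0 ?monic_neq0 ?monicXaddC.
Qed.

(* The data of a dual basis for [P], with generators [a L x^L] and [a R x^R]. *)
Lemma ex_dual_basis : exists (L R : int) (T1 T2 : {poly K}), [/\ T1 + T2 = 1,
  forall m, a L * shift L (Agen (m - L)) %| T1 * a m &
  forall m, a R * shift R (Agen (m - R)) %| T2 * a m].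
Proof.
have [R stable_R] := ex_a_stable_right ha hPr.
have [L le_LR sq_left] := ex_a_sqstep_left ha hPA hPr hnl R.
have [G [H [aLG GH coGH]]] := a_quotient_coprime L (absz (R - L)).
rewrite (_ : L + _ = R) in aLG; last by lia.
have /Bezout_eq1_coprimepP [[u v] /= uv1] := coGH.
have G0 : G != 0 by apply: contraNneq (ha L) => G0; rewrite -aLG G0 mul0r.
have aR_dvd m : L <= m -> a R %| a m.
  by move=> le_Lm; have [/dvdp_a_le ->|/ltW/stable_R] // := leP m R; apply: hPr.
have left_tail m : m < L -> a L * sqrun m (absz (L - m)) %| a m.
  move=> lt_mL; have := dvdp_sqrun_left sq_left (absz (L - m)).
  by rewrite (_ : L - _ = m) //; lia.
exists L, R, (u * G), (v * H); split=> // m; rewrite shift_Agen.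
- case: ltP => [lt_mL|le_Lm].
    exact: dvdp_trans (left_tail m lt_mL) (dvdp_mull _ (dvdpp _)).
  by rewrite mulr1 -aLG -mulrA dvdp_mull // dvdp_mul2l // aR_dvd.
- case: ltP => [lt_mR|le_Rm]; last by rewrite mulr1 dvdp_mull // aR_dvd; lia.
  rewrite -mulrA dvdp_mull // -(dvdp_mul2l _ _ G0) !mulrA aLG GH.
  have [lt_mL|le_Lm] := ltP m L.
  + rewrite (_ : absz (R - m) = (absz (L - m) + absz (R - L))%N); last by lia.
    rewrite sqrunD (_ : m + _ = L); last by lia.
    by rewrite mulrA [X in _ %| X]mulrC dvdp_mul2r ?sqrun_neq0 ?left_tail.
  + rewrite (_ : absz (R - L) = (absz (m - L) + absz (R - m))%N); last by lia.
    rewrite sqrunD (_ : L + _ = m); last by lia.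
    rewrite mulrAC dvdp_mul2r ?sqrun_neq0 // mulrC.
    by have := dvdp_a_sqrun hPr L (absz (m - L)); rewrite (_ : L + _ = m) //; lia.
Qed.

End DualBasisData.

Section DualCoordinate.
Variable K : fieldType.
Variable a : int -> {poly K}.
Hypothesis ha : forall i, a i != 0.
Variables (i : int) (T : {poly K}).
Hypothesis dvd_T : forall m, a i * shift i (Agen (m - i)) %| T * a m.
Implicit Types (p b : Qel K).

Definition dual_coord p : Qel K := fun k => shift (- i) ((T * p (k + i)) %/ a i).

Lemma dvdp_dual_coord p m : inP a p -> a i %| T * p m.
Proof.
move=> [_ /(_ m) [r ->]]; rewrite mulrCA dvdp_mull //.
exact: dvdp_trans (dvdp_mulr _ (dvdpp _)) (dvd_T m).
Qed.

Lemma dual_coordD p q : dual_coord (addQ p q) = addQ (dual_coord p) (dual_coord q).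
Proof. by apply: funext => k; rewrite /dual_coord /addQ mulrDr divpD rmorphD. Qed.

Lemma dual_coord_supp p l : dual_coord p l != 0 -> p (l + i) != 0.
Proof. by apply: contraNneq => p0; rewrite /dual_coord p0 mulr0 div0p rmorph0. Qed.

Lemma inA_dual_coord p : inP a p -> inA (dual_coord p).
Proof.
move=> [[N pN] inPp]; apply/inAP; split=> [|k].
  exists (N + absz i)%N => k Hk; apply/eqP; apply: contraTT isT => /dual_coord_supp.
  by rewrite pN ?eqxx //; lia.
have [r pk] := inPp (k + i); have /dvdpP [q Hq] := dvd_T (k + i).
rewrite /dual_coord pk mulrCA Hq (_ : k + i - i = k); last by ring.
by rewrite [a i * _]mulrC !mulrA mulpK // rmorphM /= shiftK dvdp_mull.
Qed.

Lemma dual_coordM p b : inP a p -> inA b -> dual_coord (mulQ p b) = mulQ (dual_coord p) b.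
Proof.
move=> Pp Ab; have [[N pN] _] := Pp; apply: funext => k.
rewrite (mulQE (s := [seq l - i | l <- window N]) _ _ (inA_Agraded (inA_dual_coord Pp)).1).
- rewrite big_map /dual_coord (mulQ_window _ _ pN) mulr_sumr.
  rewrite (big_morph _ (divpD (a i)) (div0p _)) rmorph_sum.
  apply: eq_bigr => l _; rewrite mulrA -divp_mulAC ?dvdp_dual_coord //.
  rewrite rmorphM /= shift_shift (_ : l - i + i = l); last by ring.
  by congr (_ * shift _ (b _)); ring.
- by rewrite map_inj_uniq ?uniq_window // => x y /addIr.
- move=> l /dual_coord_supp pl; apply/mapP; exists (l + i); last by ring.
  exact: fbounded_window pN _ pl.
Qed.

Lemma mulQ_mono_dual_coord p k : inP a p ->
  mulQ (mono i (a i)) (dual_coord p) k = T * p k.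
Proof.
move=> Pp; rewrite mulQ_monol /dual_coord shift_shift addrN shift_at0.
by rewrite (_ : k - i + i = k) ?divpKC ?dvdp_dual_coord //; ring.
Qed.

End DualCoordinate.

Section DualBasisLemma.
Variable K : fieldType.
Variable a : int -> {poly K}.
Hypothesis ha : forall i, a i != 0.
Hypothesis hPr : forall f b, inP a f -> inA b -> inP a (mulQ f b).

Lemma projectiveP_dual_basis L R (T1 T2 : {poly K}) : T1 + T2 = 1 ->
  (forall m, a L * shift L (Agen (m - L)) %| T1 * a m) ->
  (forall m, a R * shift R (Agen (m - R)) %| T2 * a m) -> projectiveP a.
Proof.
move=> T12 dvd1 dvd2 M N pi [piD piM] pi_onto g [gD gM].
have [mL pi_mL] := pi_onto (g (mono L (a L))).
have [mR pi_mR] := pi_onto (g (mono R (a R))).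
have AL p : inP a p -> inA (dual_coord a L T1 p) by exact: inA_dual_coord.
have AR p : inP a p -> inA (dual_coord a R T2 p) by exact: inA_dual_coord.
exists (fun p => rm_act mL (dual_coord a L T1 p) + rm_act mR (dual_coord a R T2 p)).
split; first split.
- move=> p q Pp Pq; rewrite !dual_coordD !rm_actDr; try by [apply: AL | apply: AR].
  by rewrite addrACA.
- move=> p b Pp Ab; rewrite (dual_coordM ha dvd1) // (dual_coordM ha dvd2) //.
  by rewrite !rm_actM ?rm_actDl //; by [apply: AL | apply: AR].
- move=> p Pp; have AL' := AL p Pp; have AR' := AR p Pp.
  rewrite piD !piM // pi_mL pi_mR -!gM //; try exact: inP_mono.
  rewrite -gD; [|exact: hPr (inP_mono a L) AL' | exact: hPr (inP_mono a R) AR'].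
  congr g; apply: funext => k.
  by rewrite /addQ !(mulQ_mono_dual_coord _ k Pp) // -mulrDl T12 mul1r.
Qed.

End DualBasisLemma.

Section SeriesModule.
Variable K : fieldType.
Implicit Types (b c : Qel K).

(* Arbitrary, not necessarily finitely supported, series sum_k m_k x^k with
   Q acting by right multiplication. *)
Definition Mcar : zmodType := int -> {poly K}.

Definition actM (m : Mcar) b : Mcar :=
  fun k => \sum_(j <- window (bnd b)) m (k - j) * shift (k - j) (b j).

Lemma actME m b (s : seq int) k : finsupp b -> uniq s -> supp_in b s ->
  actM m b k = \sum_(j <- s) m (k - j) * shift (k - j) (b j).
Proof. by move=> *; apply: big_window_bnd => // j ->; rewrite rmorph0 mulr0. Qed.

Lemma actM_window m b N k : fbounded b N ->
  actM m b k = \sum_(j <- window N) m (k - j) * shift (k - j) (b j).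
Proof.
by move=> bN; apply: actME; [exists N | exact: uniq_window | exact: fbounded_window].
Qed.

Lemma actMDl m m' b : actM (m + m') b = actM m b + actM m' b.
Proof.
apply: funext => k; rewrite !addrfctE /actM /= -big_split.
by apply: eq_bigr => j _; rewrite mulrDl.
Qed.

Lemma actMDr m b c : inA b -> inA c -> actM m (addQ b c) = actM m b + actM m c.
Proof.
move=> /inAP [[Nb bN] _] /inAP [[Nc cN] _]; apply: funext => k; rewrite addrfctE /=.
have bN' := fbounded_maxl (N' := Nc) bN; have cN' := fbounded_maxr (N := Nb) cN.
have bcN : fbounded (addQ b c) (maxn Nb Nc) by move=> i lt_i; rewrite /addQ bN' ?cN' ?addr0.
rewrite (actM_window m k bcN) (actM_window m k bN') (actM_window m k cN') -big_split.
by apply: eq_bigr => j _; rewrite /addQ rmorphD mulrDr.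
Qed.

Lemma actM_mono m i p k : actM m (mono i p) k = m (k - i) * shift (k - i) p.
Proof.
rewrite (actME (s := [:: i]) _ _ (finsupp_mono i p)) //; last exact: supp_mono.
by rewrite big_seq1 /mono eqxx.
Qed.

Lemma actM1 m : actM m (oneQ K) = m.
Proof. by apply: funext => k; rewrite actM_mono subr0 rmorph1 mulr1. Qed.

Lemma actMM m b c : inA b -> inA c -> actM m (mulQ b c) = actM (actM m b) c.
Proof.
move=> /inAP [[Nb bN] _] /inAP [[Nc cN] _]; apply: funext => k.
rewrite (actM_window m k (fbounded_mulQ bN cN)) (actM_window _ k cN).
under eq_bigr => i _ do rewrite (mulQ_window _ _ bN) rmorph_sum mulr_sumr.
under [RHS]eq_bigr => l _ do rewrite (actM_window m _ bN) mulr_suml.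
rewrite exchange_big [RHS]exchange_big; apply: eq_bigr => j _.
rewrite (@big_window_shift _ _ _ Nc j); last first.
  move=> i; have [cij0|cij] := eqVneq (c (i - j)) 0.
    by rewrite cij0 !(rmorph0, mulr0) eqxx.
  have [bj0|bj] := eqVneq (b j) 0; first by rewrite bj0 !(rmorph0, mul0r, mulr0) eqxx.
  have le_ij : (absz (i - j) <= Nc)%N by rewrite leqNgt; apply: contra cij => /cN ->.
  have le_j : (absz j <= Nb)%N by rewrite leqNgt; apply: contra bj => /bN ->.
  by split => //; lia.
apply: eq_bigr => l _; rewrite rmorphM /= shift_shift -mulrA.
by congr (m _ * (shift _ _ * shift _ (c _))); ring.
Qed.

End SeriesModule.

Section QuotientModule.
Variable K : fieldType.
Implicit Types (m : Mcar K) (b c : Qel K).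

Lemma inA_root b l (s : int) : inA b -> 0 < s -> s <= - l -> (b l).[s%:~R] = 0.
Proof.
move=> /inAP [_ /(_ l) /dvdpP [q ->]] s0 sl.
by rewrite hornerM (rootP (Agen_root K s0 sl)) mulr0.
Qed.

Definition Ncar : zmodType := nat -> K.
Definition piN m : Ncar := fun t => (m (- t%:Z)).[0].
Definition liftN (u : Ncar) : Mcar K := fun k => if k <= 0 then (u (absz k))%:P else 0.
Definition actN (u : Ncar) b : Ncar := piN (actM (liftN u) b).

Lemma piND m m' : piN (m + m') = piN m + piN m'.
Proof. by apply: funext => t; rewrite !addrfctE /piN /= hornerD. Qed.

Lemma piN_liftN u : piN (liftN u) = u.
Proof. by apply: funext => t; rewrite /piN /liftN oppr_le0 abszN hornerC. Qed.

Lemma liftND u u' : liftN (u + u') = liftN u + liftN u'.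
Proof.
by apply: funext => k; rewrite !addrfctE /liftN /=; case: ifP; rewrite ?polyCD ?addr0.
Qed.

(* For [b] in A, the terms of [actM m b] with [t + j < 0] have no constant
   term, because [Agen j] vanishes at [1, ..., -j]. *)
Lemma piN_actM m b t : inA b -> piN (actM m b) t =
  \sum_(j <- window (bnd b)) (if 0 <= t%:Z + j
    then piN m (absz (t%:Z + j)) * (b j).[(- (t%:Z + j))%:~R] else 0).
Proof.
move=> Ab; rewrite /piN /actM horner_sum; apply: eq_bigr => j _.
rewrite hornerM horner_shift add0r (_ : - t%:Z - j = - (t%:Z + j)); last by ring.
case: ifP => [le0_tj|/negbT lt_tj]; first by rewrite (_ : (absz _)%:Z = t%:Z + j) //; lia.
by rewrite (inA_root Ab) ?mulr0 //; lia.
Qed.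

Lemma actNE u b t : inA b -> actN u b t =
  \sum_(j <- window (bnd b)) (if 0 <= t%:Z + j
    then u (absz (t%:Z + j)) * (b j).[(- (t%:Z + j))%:~R] else 0).
Proof. by move=> Ab; rewrite /actN piN_actM // piN_liftN. Qed.

Lemma piN_actM_hom m b : inA b -> piN (actM m b) = actN (piN m) b.
Proof. by move=> Ab; apply: funext => t; rewrite actNE // piN_actM. Qed.

Lemma actNDl u u' b : actN (u + u') b = actN u b + actN u' b.
Proof. by rewrite /actN liftND actMDl piND. Qed.

Lemma actNDr u b c : inA b -> inA c -> actN u (addQ b c) = actN u b + actN u c.
Proof. by move=> Ab Ac; rewrite /actN actMDr // piND. Qed.

Lemma actNM u b c : inA b -> inA c -> actN u (mulQ b c) = actN (actN u b) c.
Proof. by move=> Ab Ac; rewrite /actN actMM // piN_actM_hom. Qed.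

Lemma actN1 u : actN u (oneQ K) = u.
Proof. by rewrite /actN actM1 piN_liftN. Qed.

Lemma piN_onto u : exists m, piN m = u.
Proof. by exists (liftN u); apply: piN_liftN. Qed.

Definition Mmod := @RModule K (Mcar K) (@actM K) (fun m m' b _ => actMDl m m' b)
  (@actMDr K) (@actMM K) (@actM1 K).
Definition Nmod := @RModule K Ncar actN (fun u u' b _ => actNDl u u' b)
  actNDr actNM actN1.

Lemma is_hom_piN : is_hom (M := Mmod) (N := Nmod) piN.
Proof. by split=> [m m'|m b]; [exact: piND | exact: piN_actM_hom]. Qed.

End QuotientModule.

Section NotProjective.
Variable K : fieldType.
Variable a : int -> {poly K}.
Hypothesis ha : forall i, a i != 0.
Hypothesis hPr : forall f b, inP a f -> inA b -> inP a (mulQ f b).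
Variables (n : int) (c : K).
Hypothesis a_lin : a n = c *: (('X + (n%:~R)%:P) * a (n + 1)).
Implicit Types (p b : Qel K).

Definition gN p : Ncar K := fun t => ((p (n - t%:Z)) %/ a n).[(- n)%:~R].

Lemma gND p q : gN (addQ p q) = gN p + gN q.
Proof. by apply: funext => t; rewrite addrfctE /gN /addQ divpD hornerD. Qed.

Lemma c_neq0 : c != 0.
Proof. by apply: contraNneq (ha n) => c0; rewrite a_lin c0 scale0r. Qed.

(* For [t + j < 0], [Agen j] shifted to degree [n - t - j] contains the factor
   (z + n)^2, one more factor (z + n) than [a n]. *)
Lemma gN_vanish p b j t : inP a p -> inA b -> t%:Z + j < 0 ->
  ((p (n - t%:Z - j) * shift (n - t%:Z - j) (b j)) %/ a n).[(- n)%:~R] = 0.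
Proof.
move=> [_ Pp] /inAP [_ Ab] lt_tj; set k := n - t%:Z - j.
pose Xn : {poly K} := 'X + (n%:~R)%:P.
suff /dvdpP [w ->] : a n * Xn %| p k * shift k (b j).
  by rewrite mulrCA mulrC mulpK // hornerM /Xn hornerD hornerX hornerC -intrD addNr mulr0.
have [r ->] := Pp k; have /dvdpP [q ->] := Ab j.
pose N := (absz j - t - 1)%N.
rewrite Agen_lt0; last by lia.
rewrite rmorphM /= shift_sqrun (_ : absz j = t + (1 + N))%N; last by lia.
rewrite !sqrunD sqrun1 (_ : j + k + t%:Z = n); last by rewrite /k; ring.
rewrite (_ : k = n + 1 + N%:Z); last by rewrite /k /N; lia.
have := dvdp_a_sqrun hPr (n + 1) N.
rewrite a_lin -scalerAl dvdpZl ?c_neq0 // -/Xn.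
move=> dvd_a; rewrite (_ : Xn * _ * Xn = Xn ^+ 2 * a (n + 1)); last by ring.
apply: (dvdp_trans (dvdp_mul (dvdpp (Xn ^+ 2)) dvd_a)); apply/dvdpP.
by exists (r * shift (n + 1 + N%:Z) q * sqrun (j + (n + 1 + N%:Z)) t); ring.
Qed.

Lemma gNM p b : inP a p -> inA b -> gN (mulQ p b) = actN (gN p) b.
Proof.
move=> Pp Ab; have [fp Pp'] := Pp; have [fb _] := (inAP b).1 Ab.
apply: funext => t; rewrite {1}/gN.
have -> : mulQ p b (n - t%:Z) = \sum_(j <- window (bnd b))
    p (n - t%:Z - j) * shift (n - t%:Z - j) (b j).
  rewrite mulQ_bnd (big_window_reflect (N' := bnd b) (m := n - t%:Z)).
    by apply: eq_bigr => j _; rewrite (_ : n - t%:Z - (n - t%:Z - j) = j) //; ring.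
  move=> i; have [->|pi] := eqVneq (p i) 0; first by rewrite mul0r eqxx.
  have [->|bi] := eqVneq (b (n - t%:Z - i)) 0; first by rewrite rmorph0 mulr0 eqxx.
  by move=> _; split; rewrite leqNgt;
    [apply: contra pi => /(bndP fp) -> | apply: contra bi => /(bndP fb) ->].
rewrite actNE // (big_morph _ (divpD (a n)) (div0p _)) horner_sum.
apply: eq_bigr => j _; case: ifP => [le0_tj|/negbT lt_tj].
  rewrite /gN -divp_mulAC; last first.
    by have [r ->] := Pp' (n - t%:Z - j); apply: dvdp_mull; apply: (dvdp_a_le hPr); lia.
  rewrite hornerM horner_shift (_ : n - (absz (t%:Z + j))%:Z = n - t%:Z - j); last by lia.
  by congr (_ * _.[_]); rewrite -intrD; congr _%:~R; ring.
by apply: gN_vanish; rewrite // ltNge.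
Qed.

(* In P, a_n x^n . x = a_(n+1) x^(n+1) . c (z - 1); a lift of [gN] through
   [piN] would map the right side, hence also [a_n x^n], to a series whose
   coefficient of x^0 vanishes at z = 0, whereas [gN (a_n x^n)] is 1 there. *)
Lemma not_projectiveP : ~ projectiveP a.
Proof.
move=> projP.
have gN_hom : is_Phom a (N := Nmod K) gN.
  by split=> [p q _ _|p b Pp Ab]; [exact: gND | exact: gNM].
have [h [[_ hM] lift_h]] := projP _ _ _ (is_hom_piN K) (@piN_onto K) gN gN_hom.
have E : mulQ (mono n (a n)) (xQ K) =
    mulQ (mono (n + 1) (a (n + 1))) (mono 0 (c *: ('X - 1))).
  rewrite /xQ !mulQ_mono rmorph1 mulr1 addr0 -mul_polyC rmorphM /= shiftC.
  by rewrite shift_Xsub1 mul_polyC -scalerAr mulrC -a_lin.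
have := congr1 h E; rewrite !hM; try by [apply: inP_mono | apply: inA_x | apply: inA_const].
move=> /(congr1 (fun m => m 1)) /=; rewrite !actM_mono subrr subr0 rmorph1 mulr1.
move=> h0; have := congr1 (fun u => u 0%N) (lift_h _ (inP_mono a n)).
rewrite /piN /gN /mono /= subr0 eqxx divpp // h0 hornerC hornerM -mul_polyC.
rewrite horner_shift hornerM hornerC hornerD hornerX hornerN hornerC add0r mulr1z subrr.
by rewrite !mulr0 => /eqP; rewrite eq_sym oner_eq0.
Qed.

End NotProjective.

Theorem lemma3p17 (K : closedFieldType) (hK : [pchar K] =i pred0)
  (a : int -> {poly K}) (ha : forall i, a i != 0)
  (hPA : forall f, inP a f -> inA f)
  (hPr : forall f b, inP a f -> inA b -> inP a (mulQ f b)) :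
  projectiveP a <->
  (forall n : int, ~ exists c : K, a n = c *: (('X + (n%:~R)%:P) * a (n + 1))).
Proof.
split=> [projP n [c a_lin] | hnl]; first exact: (not_projectiveP ha hPr a_lin projP).
have [L [R [T1 [T2 [T12 dvd1 dvd2]]]]] := ex_dual_basis hK ha hPA hPr hnl.
exact: (projectiveP_dual_basis ha hPr T12 dvd1 dvd2).
Qed.
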